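(* Let $A,B\in\mathbb{C}^{m\times n}$ and let $Q_A=A^\dagger A$. The following are equivalent: (a) $A\le^{\diamond}B$; (b) $\operatorname{rk}(B^\dagger-A^\dagger)=\operatorname{rk}((I_n-Q_A)B^\dagger)$ and $\mathcal{R}(A^* )\subseteq\mathcal{R}(B^* )$; (c) there exists an idempotent matrix $Q\in\mathbb{C}^{n\times n}$ with $A^\dagger=QB^\dagger$, and $\mathcal{R}(A^* )\subseteq\mathcal{R}(B^* )$.
   Context: For a matrix $M$, $M^*$ is its conjugate transpose, $M^\dagger$ its Moore–Penrose inverse, $\mathcal{R}(M)$ its column space, $\operatorname{rk}(M)$ its rank. Diamond partial order: for $A,B\in\mathbb{C}^{m\times n}$, $A\le^{\diamond}B$ means $\mathcal{R}(A)\subseteq\mathcal{R}(B)$, $\mathcal{R}(A^* )\subseteq\mathcal{R}(B^* )$, and $AB^*A=AA^*A$. *)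

(* Complex matrices over an arbitrary numeric closed field C
   (e.g. algC, or R[i] for R real closed); conjugation is Num.conj (x^* ). *)
From HB Require Import structures.
From mathcomp Require Import all_boot all_order all_algebra.
Set Implicit Arguments. Unset Strict Implicit. Unset Printing Implicit Defensive.
Import Order.TTheory GRing.Theory Num.Theory.
Local Open Scope ring_scope.

Definition ctmx (C : numClosedFieldType) m n (M : 'M[C]_(m, n)) : 'M[C]_(n, m) :=
  (map_mx Num.conj M)^T.

Definition is_MP (C : numClosedFieldType) m n (A : 'M[C]_(m, n)) (X : 'M[C]_(n, m)) : Prop :=
  [/\ A *m X *m A = A,
      X *m A *m X = X,
      ctmx (A *m X) = A *m X &
      ctmx (X *m A) = X *m A].

(* column-space inclusion R(A) \subseteq R(B); mathcomp's <=%MS is on row spaces *)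
Definition colspace_sub (C : numClosedFieldType) m n p (A : 'M[C]_(m, n)) (B : 'M[C]_(m, p)) : bool :=
  (A^T <= B^T)%MS.

Definition diamond_le (C : numClosedFieldType) m n (A B : 'M[C]_(m, n)) : Prop :=
  [/\ colspace_sub A B, colspace_sub (ctmx A) (ctmx B) & A *m ctmx B *m A = A *m ctmx A *m A].

(* Once R(A^* ) <= R(B^* ), i.e.
   A B^+ B = A (which forces B^+ B A^+ = A^+), the diamond order A <= B amounts to
   A^+ B B^+ = A^+ and A^+ B A^+ = A^+.  For (c) take Q := A^+ B; conversely
   A^+ = Q B^+ yields both identities.  For (b), M := B^+ - A^+ satisfies
   M = M B (I - Q_A) M, so rk M = rk ((I - Q_A) M) = rk ((I - Q_A) B^+); conversely
   equal ranks give M = N (I - Q_A) B^+ for some N, whence M B A^+ = 0. *)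
From mathcomp Require Import all_boot all_order all_algebra.
Import GRing.Theory Num.Theory.
Local Open Scope ring_scope.

Lemma ctmx_mul (C : numClosedFieldType) m n p (A : 'M[C]_(m, n)) (B : 'M[C]_(n, p)) :
  ctmx (A *m B) = ctmx B *m ctmx A.
Proof. by rewrite /ctmx map_mxM trmx_mul. Qed.

Lemma ctmxK (C : numClosedFieldType) m n (A : 'M[C]_(m, n)) : ctmx (ctmx A) = A.
Proof. by apply/matrixP=> i j; rewrite /ctmx !mxE conjCK. Qed.

Lemma colspace_subP (C : numClosedFieldType) m n p (M : 'M[C]_(m, n)) (N : 'M[C]_(m, p)) :
  colspace_sub M N <-> exists D, M = N *m D.
Proof.
split=> [/submxP [D defMt] | [D ->]]; last by rewrite /colspace_sub trmx_mul submxMl.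
by exists D^T; rewrite -[M]trmxK defMt trmx_mul trmxK.
Qed.

Lemma submx_mulmxl_eq_rank (F : fieldType) m n p (P : 'M[F]_(p, m)) (M : 'M[F]_(m, n)) :
  \rank (P *m M) = \rank M -> (M <= P *m M)%MS.
Proof.
move=> eq_rk; have := (mxrank_leqif_eq (submxMl P M)).2.
by rewrite eq_rk eqxx => /esym/andP [].
Qed.

Section MoorePenrose.

Variables (C : numClosedFieldType) (m n : nat).
Implicit Types (A B : 'M[C]_(m, n)) (X Y : 'M[C]_(n, m)).

Lemma MP_ctmx_factors {A X} : is_MP A X ->
  [/\ X = ctmx A *m ctmx X *m X, X = X *m ctmx X *m ctmx A,
      A = ctmx X *m ctmx A *m A & A = A *m ctmx A *m ctmx X].
Proof.
case=> AXA XAX AXh XAh; split.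
- by rewrite -ctmx_mul XAh XAX.
- by rewrite -mulmxA -ctmx_mul AXh mulmxA XAX.
- by rewrite -ctmx_mul AXh AXA.
- by rewrite -mulmxA -ctmx_mul XAh mulmxA AXA.
Qed.

Lemma MP_compl_mul0 {A X} : is_MP A X -> (1%:M - X *m A) *m X = 0.
Proof. by case=> _ XAX _ _; rewrite mulmxBl mul1mx XAX subrr. Qed.

Lemma colspace_sub_MP {A B Y} : is_MP B Y -> colspace_sub A B <-> B *m Y *m A = A.
Proof.
case=> BYB _ _ _; split=> [/colspace_subP [D ->] | <-]; first by rewrite !mulmxA BYB.
by apply/colspace_subP; exists (Y *m A); rewrite mulmxA.
Qed.

Lemma rowspace_sub_MP {A B Y} :
  is_MP B Y -> colspace_sub (ctmx A) (ctmx B) <-> A *m Y *m B = A.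
Proof.
case=> BYB _ _ _; split=> [/colspace_subP [D defA] | AYB].
  have -> : A = ctmx D *m B by rewrite -[A]ctmxK defA ctmx_mul ctmxK.
  by rewrite -!mulmxA (mulmxA B) BYB.
by apply/colspace_subP; exists (ctmx (A *m Y)); rewrite -ctmx_mul AYB.
Qed.

Variables (A B : 'M[C]_(m, n)) (X Y : 'M[C]_(n, m)).
Hypotheses (MP_A : is_MP A X) (MP_B : is_MP B Y).

Lemma MP_rowspace_fix : A *m Y *m B = A -> Y *m B *m X = X.
Proof.
have [_ _ _ YBh] := MP_B; have [defX _ _ _] := MP_ctmx_factors MP_A.
move=> AYB; rewrite {2}defX -AYB !ctmx_mul -!mulmxA (mulmxA (ctmx B)) -ctmx_mul YBh.
by rewrite !mulmxA -(mulmxA (Y *m B)) -(mulmxA (Y *m B)) -defX.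
Qed.

Lemma MP_colspace_fixE : B *m Y *m A = A <-> X *m B *m Y = X.
Proof.
have [_ _ BYh _] := MP_B; have [_ defX defA _] := MP_ctmx_factors MP_A.
split=> [BYA | XBY].
  by rewrite {2}defX -BYA [ctmx (_ *m A)]ctmx_mul BYh !mulmxA -defX.
rewrite {2}defA -XBY -[X *m B *m Y]mulmxA [ctmx (X *m _)]ctmx_mul BYh.
by rewrite -!mulmxA (mulmxA (ctmx X)) -defA.
Qed.

Lemma MP_diamond_eqE : A *m ctmx B *m A = A *m ctmx A *m A <-> X *m B *m X = X.
Proof.
have [_ XAX _ _] := MP_A; have [defXl defXr defAl defAr] := MP_ctmx_factors MP_A.
split=> [eqA | XBX].
  have sandwichX M : X *m M *m X = X *m ctmx X *m (ctmx A *m M *m ctmx A) *m (ctmx X *m X).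
    by rewrite !mulmxA -defXr -!mulmxA (mulmxA (ctmx A)) -defXl.
  have eqAh : ctmx A *m B *m ctmx A = ctmx A *m A *m ctmx A.
    by move: (congr1 (@ctmx C _ _) eqA); rewrite !ctmx_mul !ctmxK !mulmxA.
  by rewrite sandwichX eqAh -sandwichX XAX.
have sandwichA M : A *m M *m A = A *m ctmx A *m (ctmx X *m M *m ctmx X) *m (ctmx A *m A).
  by rewrite !mulmxA -defAr -!mulmxA (mulmxA (ctmx X)) -defAl.
have ctmx_XMX M : X *m M *m X = X -> ctmx X *m ctmx M *m ctmx X = ctmx X.
  by move=> XMX; rewrite -{3}XMX !ctmx_mul mulmxA.
by rewrite sandwichA [RHS]sandwichA !ctmx_XMX.
Qed.

Lemma diamond_leE : A *m Y *m B = A ->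
  diamond_le A B <-> X *m B *m Y = X /\ X *m B *m X = X.
Proof.
move=> AYB; split=> [[colAB _ eqA] | [XBY XBX]].
  by split; [apply/MP_colspace_fixE/(colspace_sub_MP MP_B) | apply/MP_diamond_eqE].
split.
- exact/(colspace_sub_MP MP_B)/MP_colspace_fixE.
- exact/(rowspace_sub_MP MP_B).
- exact/MP_diamond_eqE.
Qed.

Lemma diamond_le_idempotentE : diamond_le A B <->
  (exists Q : 'M[C]_n, Q *m Q = Q /\ X = Q *m Y) /\ colspace_sub (ctmx A) (ctmx B).
Proof.
have [_ YBY _ _] := MP_B.
split=> [lAB | [[Q [QQ defX]] rowAB]].
  have rowAB : colspace_sub (ctmx A) (ctmx B) by case: lAB.
  have [XBY XBX] := (diamond_leE ((rowspace_sub_MP MP_B).1 rowAB)).1 lAB.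
  by split=> //; exists (X *m B); rewrite mulmxA XBX XBY.
have AYB := (rowspace_sub_MP MP_B).1 rowAB.
apply/(diamond_leE AYB); split; first by rewrite defX -!mulmxA (mulmxA Y) YBY.
by rewrite {1}defX -!mulmxA (mulmxA Y) (MP_rowspace_fix AYB) {1}defX mulmxA QQ -defX.
Qed.

Lemma diamond_le_rankE : diamond_le A B <->
  \rank (Y - X) = \rank ((1%:M - X *m A) *m Y) /\ colspace_sub (ctmx A) (ctmx B).
Proof.
have [_ YBY _ _] := MP_B; set P := 1%:M - X *m A; set M := Y - X.
have PY : P *m Y = P *m M by rewrite /M mulmxBr (MP_compl_mul0 MP_A) subr0.
split=> [lAB | [eq_rk rowAB]].
  have rowAB : colspace_sub (ctmx A) (ctmx B) by case: lAB.
  have AYB := (rowspace_sub_MP MP_B).1 rowAB.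
  have YBX := MP_rowspace_fix AYB.
  have [XBY XBX] := (diamond_leE AYB).1 lAB.
  have MBX : M *m B *m X = 0 by rewrite /M !mulmxBl YBX XBX subrr.
  have MBP : M *m B *m P = M *m B by rewrite mulmxBr mulmx1 mulmxA MBX mul0mx subr0.
  have MBM : M *m B *m M = M.
    by rewrite /M !mulmxBr !mulmxBl YBY XBY YBX XBX subrr subr0.
  have defM : M = M *m B *m (P *m M) by rewrite mulmxA MBP MBM.
  split=> //; apply/eqP; rewrite PY eqn_leq mxrankM_maxr.
  by rewrite {1}defM mxrankM_maxr.
have AYB := (rowspace_sub_MP MP_B).1 rowAB.
have /submxP [N defM] : (M <= P *m M)%MS by apply: submx_mulmxl_eq_rank; rewrite -PY.
have defX : X = (1%:M - N *m P) *m Y.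
  by rewrite mulmxBl mul1mx -mulmxA PY -defM /M opprB addrC subrK.
apply/(diamond_leE AYB); split.
  by rewrite {1}defX -!mulmxA (mulmxA Y) YBY -defX.
have YBX := MP_rowspace_fix AYB.
have : M *m B *m X = 0.
  by rewrite defM -PY -!mulmxA (mulmxA Y) YBX (MP_compl_mul0 MP_A) mulmx0.
by rewrite /M !mulmxBl YBX => /eqP; rewrite subr_eq0 => /eqP <-.
Qed.

End MoorePenrose.

Theorem corollary3p3 (C : numClosedFieldType) (m n : nat)
    (A B : 'M[C]_(m, n)) (Ad Bd : 'M[C]_(n, m)) :
  is_MP A Ad -> is_MP B Bd ->
  let QA := Ad *m A in
  (diamond_le A B <->
   (\rank (Bd - Ad) = \rank ((1%:M - QA) *m Bd) /\ colspace_sub (ctmx A) (ctmx B))) /\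
  (diamond_le A B <->
   ((exists Q : 'M[C]_n, Q *m Q = Q /\ Ad = Q *m Bd) /\ colspace_sub (ctmx A) (ctmx B))).
Proof.
move=> MP_A MP_B QA.
by split; [exact: diamond_le_rankE | exact: diamond_le_idempotentE].
Qed.
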